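(* Let $(X,\beta,\kappa)$ be an analytically locally compact space (AnLCS). Then $FO(\mathbf{\Sigma}^0_1(X))\leq_m FO(\mathbb{N}_2)$.
   Context: For a topological space $X$, $\mathbf{\Sigma}^0_1(X)$ denotes the lattice of all open subsets of $X$ (ordered by inclusion), and $FO(\mathbb{A})$ denotes the set of first-order sentences (in the signature of $\mathbb{A}$) true in a structure $\mathbb{A}$; for lattices of sets the signature may be taken to be $\{\subseteq\}$. $\leq_m$ is many-one reducibility of sets of sentences (coded by natural numbers). $\mathbb{N}_2=(\omega\cup P(\omega);\omega,P(\omega),\in,+,\times)$ is the structure of second-order arithmetic, so $FO(\mathbb{N}_2)$ is (equivalent to) the full second-order theory of arithmetic. Let $\{D_n\}$ be the canonical numbering of finite subsets of $\omega$. An analytically locally compact space (AnLCS) is a triple $(X,\beta,\kappa)$ where $X$ is a topological space, $\beta:\omega\to P(X)$ is a numbering of a base of $X$ that contains the empty set, and $\kappa:\omega\to P(X)$ is a numbering of some compact subsets of $X$, such that each $\beta_n$ is a union of some sets from $\{\kappa_i\mid i<\omega\}$, and the relation $\{(i,n)\mid \kappa_i\subseteq\bigcup_{a\in D_n}\beta_a\}$ is analytical (i.e. belongs to $\bigcup_n\Sigma^1_n$ of the analytical hierarchy of subsets of $\omega$). *)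

From Stdlib Require Import Arith List.
Import ListNotations.

Definition subset {X : Type} (A B : X -> Prop) : Prop := forall x, A x -> B x.

Record is_topology {X : Type} (opn : (X -> Prop) -> Prop) : Prop := {
  top_ext : forall U V : X -> Prop, (forall x, U x <-> V x) -> opn U -> opn V;
  top_full : opn (fun _ => True);
  top_union : forall F : (X -> Prop) -> Prop,
      (forall U, F U -> opn U) -> opn (fun x => exists U, F U /\ U x);
  top_inter : forall U V, opn U -> opn V -> opn (fun x => U x /\ V x)
}.

Definition compact {X : Type} (opn : (X -> Prop) -> Prop) (K : X -> Prop) : Prop :=
  forall F : (X -> Prop) -> Prop,
    (forall U, F U -> opn U) ->
    (forall x, K x -> exists U, F U /\ U x) ->
    exists l : list (X -> Prop),
      (forall U, In U l -> F U) /\ (forall x, K x -> exists U, In U l /\ U x).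

Definition is_base {X : Type} (opn : (X -> Prop) -> Prop) (beta : nat -> X -> Prop) : Prop :=
  (forall n, opn (beta n)) /\
  (forall U, opn U -> forall x, U x -> exists n, beta n x /\ subset (beta n) U).

(* Canonical numbering of finite sets: D_n = { i | bit i of n is 1 } *)
Definition D (n : nat) (i : nat) : Prop := Nat.testbit n i = true.

Definition cpair (a b : nat) : nat := (a + b) * (a + b + 1) / 2 + b.

Inductive prog : Type :=
| PZero : prog
| PSucc : prog
| PProj : nat -> prog               (* i-th argument (0-based) *)
| PComp : prog -> list prog -> prog
| PRec : prog -> prog -> prog
| PMu : prog -> prog.

Inductive eval : prog -> list nat -> nat -> Prop :=
| ev_zero : forall args, eval PZero args 0
| ev_succ : forall x args, eval PSucc (x :: args) (S x)
| ev_proj : forall i args y, nth_error args i = Some y -> eval (PProj i) args y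
| ev_comp : forall f gs args ys y,
    evals gs args ys -> eval f ys y -> eval (PComp f gs) args y
| ev_rec0 : forall f g args y, eval f args y -> eval (PRec f g) (0 :: args) y
| ev_recS : forall f g n args z y,
    eval (PRec f g) (n :: args) z -> eval g (n :: z :: args) y ->
    eval (PRec f g) (S n :: args) y
| ev_mu : forall f args n,
    eval f (n :: args) 0 ->
    (forall m, m < n -> exists k, eval f (m :: args) (S k)) ->
    eval (PMu f) args n
with evals : list prog -> list nat -> list nat -> Prop :=
| evs_nil : forall args, evals [] args []
| evs_cons : forall g gs args y ys,
    eval g args y -> evals gs args ys -> evals (g :: gs) args (y :: ys).

Definition computable (f : nat -> nat) : Prop :=
  exists p : prog, forall n, eval p [n] (f n).

Definition many_one_le (A B : nat -> Prop) : Prop :=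
  exists f : nat -> nat, computable f /\ forall n, A n <-> B (f n).

(* First-order language of lattices of sets: signature { subseteq }    *)
Inductive lform : Type :=
| LSub : nat -> nat -> lform
| LEq : nat -> nat -> lform
| LNot : lform -> lform
| LAnd : lform -> lform -> lform
| LOr : lform -> lform -> lform
| LImp : lform -> lform -> lform
| LAll : nat -> lform -> lform
| LEx : nat -> lform -> lform.

Fixpoint lcode (p : lform) : nat :=
  match p with
  | LSub i j => cpair 0 (cpair i j)
  | LEq i j => cpair 1 (cpair i j)
  | LNot q => cpair 2 (lcode q)
  | LAnd q r => cpair 3 (cpair (lcode q) (lcode r))
  | LOr q r => cpair 4 (cpair (lcode q) (lcode r))
  | LImp q r => cpair 5 (cpair (lcode q) (lcode r))
  | LAll i q => cpair 6 (cpair i (lcode q))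
  | LEx i q => cpair 7 (cpair i (lcode q))
  end.

Fixpoint lfree_in (bd : nat -> Prop) (p : lform) : Prop :=
  match p with
  | LSub i j | LEq i j => bd i /\ bd j
  | LNot q => lfree_in bd q
  | LAnd q r | LOr q r | LImp q r => lfree_in bd q /\ lfree_in bd r
  | LAll i q | LEx i q => lfree_in (fun k => k = i \/ bd k) q
  end.

Definition lsentence (p : lform) : Prop := lfree_in (fun _ => False) p.

Definition upd {A : Type} (rho : nat -> A) (i : nat) (a : A) : nat -> A :=
  fun k => if Nat.eqb k i then a else rho k.

Fixpoint lsat {X : Type} (opn : (X -> Prop) -> Prop) (rho : nat -> X -> Prop)
  (p : lform) : Prop :=
  match p with
  | LSub i j => subset (rho i) (rho j)
  | LEq i j => forall x, rho i x <-> rho j x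
  | LNot q => ~ lsat opn rho q
  | LAnd q r => lsat opn rho q /\ lsat opn rho r
  | LOr q r => lsat opn rho q \/ lsat opn rho r
  | LImp q r => lsat opn rho q -> lsat opn rho r
  | LAll i q => forall U, opn U -> lsat opn (upd rho i U) q
  | LEx i q => exists U, opn U /\ lsat opn (upd rho i U) q
  end.

(* FO(Sigma^0_1(X)) : the set of codes of sentences true in the lattice of
   open sets (ordered by inclusion). *)
Definition FO_open {X : Type} (opn : (X -> Prop) -> Prop) (n : nat) : Prop :=
  exists p : lform, lcode p = n /\ lsentence p /\
    forall rho : nat -> X -> Prop, (forall k, opn (rho k)) -> lsat opn rho p.

(* Second-order arithmetic N_2 = (omega u P(omega); omega, P(omega), in, +, x)
   presented two-sortedly: number variables and set variables.          *)
Inductive aterm : Type :=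
| TVar : nat -> aterm
| TAdd : aterm -> aterm -> aterm
| TMul : aterm -> aterm -> aterm.

Inductive aform : Type :=
| AEq : aterm -> aterm -> aform
| AMem : aterm -> nat -> aform
| ANot : aform -> aform
| AAnd : aform -> aform -> aform
| AOr : aform -> aform -> aform
| AImp : aform -> aform -> aform
| AAllN : nat -> aform -> aform
| AExN : nat -> aform -> aform
| AAllS : nat -> aform -> aform
| AExS : nat -> aform -> aform.

Fixpoint tcode (t : aterm) : nat :=
  match t with
  | TVar i => cpair 0 i
  | TAdd s u => cpair 1 (cpair (tcode s) (tcode u))
  | TMul s u => cpair 2 (cpair (tcode s) (tcode u))
  end.

Fixpoint acode (p : aform) : nat :=
  match p with
  | AEq s t => cpair 0 (cpair (tcode s) (tcode t))
  | AMem t j => cpair 1 (cpair (tcode t) j)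
  | ANot q => cpair 2 (acode q)
  | AAnd q r => cpair 3 (cpair (acode q) (acode r))
  | AOr q r => cpair 4 (cpair (acode q) (acode r))
  | AImp q r => cpair 5 (cpair (acode q) (acode r))
  | AAllN i q => cpair 6 (cpair i (acode q))
  | AExN i q => cpair 7 (cpair i (acode q))
  | AAllS i q => cpair 8 (cpair i (acode q))
  | AExS i q => cpair 9 (cpair i (acode q))
  end.

Fixpoint tvars_in (bn : nat -> Prop) (t : aterm) : Prop :=
  match t with
  | TVar i => bn i
  | TAdd s u | TMul s u => tvars_in bn s /\ tvars_in bn u
  end.

Fixpoint afree_in (bn bs : nat -> Prop) (p : aform) : Prop :=
  match p with
  | AEq s t => tvars_in bn s /\ tvars_in bn t
  | AMem t j => tvars_in bn t /\ bs j
  | ANot q => afree_in bn bs q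
  | AAnd q r | AOr q r | AImp q r => afree_in bn bs q /\ afree_in bn bs r
  | AAllN i q | AExN i q => afree_in (fun k => k = i \/ bn k) bs q
  | AAllS i q | AExS i q => afree_in bn (fun k => k = i \/ bs k) q
  end.

Fixpoint teval (rho : nat -> nat) (t : aterm) : nat :=
  match t with
  | TVar i => rho i
  | TAdd s u => teval rho s + teval rho u
  | TMul s u => teval rho s * teval rho u
  end.

(* Satisfaction in the standard (full) model N_2: set variables range over
   all subsets of omega. *)
Fixpoint asat (rho : nat -> nat) (sg : nat -> nat -> Prop) (p : aform) : Prop :=
  match p with
  | AEq s t => teval rho s = teval rho t
  | AMem t j => sg j (teval rho t)
  | ANot q => ~ asat rho sg q
  | AAnd q r => asat rho sg q /\ asat rho sg r
  | AOr q r => asat rho sg q \/ asat rho sg r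
  | AImp q r => asat rho sg q -> asat rho sg r
  | AAllN i q => forall m : nat, asat (upd rho i m) sg q
  | AExN i q => exists m : nat, asat (upd rho i m) sg q
  | AAllS i q => forall S : nat -> Prop, asat rho (upd sg i S) q
  | AExS i q => exists S : nat -> Prop, asat rho (upd sg i S) q
  end.

Definition asentence (p : aform) : Prop := afree_in (fun _ => False) (fun _ => False) p.

(* FO(N_2): codes of second-order-arithmetic sentences true in N_2 *)
Definition FO_N2 (n : nat) : Prop :=
  exists p : aform, acode p = n /\ asentence p /\
    asat (fun _ => 0) (fun _ _ => False) p.

(* A binary relation on omega is analytical (in the union of the Sigma^1_n)
   iff it is definable (without parameters) in N_2, by a formula whose only
   free variables are the number variables 0 and 1. *)
Definition analytical2 (R : nat -> nat -> Prop) : Prop :=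
  exists p : aform,
    afree_in (fun k => k = 0 \/ k = 1) (fun _ => False) p /\
    forall i n : nat,
      R i n <-> asat (upd (upd (fun _ => 0) 0 i) 1 n) (fun _ _ => False) p.

Definition AnLCS {X : Type} (opn : (X -> Prop) -> Prop)
  (beta kappa : nat -> X -> Prop) : Prop :=
  is_topology opn /\
  is_base opn beta /\
  (exists n, forall x, ~ beta n x) /\
  (forall i, compact opn (kappa i)) /\
  (forall n, exists S : nat -> Prop,
      forall x, beta n x <-> exists i, S i /\ kappa i x) /\
  analytical2 (fun i n =>
      subset (kappa i) (fun x => exists a, D n a /\ beta a x)).

(* An open set U is represented by the set of basic indices { a | beta a ⊆ U }.
   The index sets arising this way are exactly the saturated ones, those A
   containing every a with beta a ⊆ ⋃_{b ∈ A} beta b.  As beta a is a union of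
   compact sets kappa i, this inclusion holds iff every kappa i ⊆ beta a is
   covered by some finite D n ⊆ A; since the relation kappa i ⊆ ⋃_{b ∈ D n} beta b
   is analytical, saturation is definable in second-order arithmetic.
   Quantifiers over open sets thus become set quantifiers relativized to
   saturated sets, and inclusion of open sets becomes inclusion of index sets.
   The reduction decodes a sentence by course-of-values recursion on its code
   and computes the code of its translation, or of a false sentence when the
   number codes no sentence. *)

From Stdlib Require Import Arith List Lia Setoid.
Import ListNotations.

(** * Computable functions of a fixed number of arguments *)

Definition computable_on (k : nat) (f : list nat -> nat) : Prop :=
  exists p : prog, forall l, length l = k -> eval p l (f l).

Lemma computable_on_ext k f g :
  (forall l, length l = k -> f l = g l) -> computable_on k f -> computable_on k g.
Proof. intros Hfg [p Hp]. exists p. intros l Hl. rewrite <- Hfg by exact Hl. auto. Qed.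

Lemma computable_on_proj k i : i < k -> computable_on k (fun l => nth i l 0).
Proof. intros Hi. exists (PProj i). intros l Hl. constructor. apply nth_error_nth'. lia. Qed.

Lemma computable_on_succ : computable_on 1 (fun l => S (nth 0 l 0)).
Proof. exists PSucc. intros [|x [|y l]] Hl; simpl in Hl; try lia. constructor. Qed.

Lemma computable_on_comp k h (gs : list (list nat -> nat)) :
  computable_on (length gs) h -> Forall (computable_on k) gs ->
  computable_on k (fun l => h (map (fun g => g l) gs)).
Proof.
  intros [ph Hph] Hgs.
  assert (Hps : exists ps, forall l, length l = k -> evals ps l (map (fun g => g l) gs)).
  { clear Hph. induction Hgs as [|g gs [p Hp] _ [ps Hps]].
    - exists []. constructor.
    - exists (p :: ps). constructor; auto. }
  destruct Hps as [ps Hps]. exists (PComp ph ps). intros l Hl.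
  econstructor; [apply Hps, Hl | apply Hph; rewrite length_map; reflexivity].
Qed.

Lemma computable_on_comp1 k (h : nat -> nat) e1 :
  computable_on 1 (fun l => h (nth 0 l 0)) -> computable_on k e1 ->
  computable_on k (fun l => h (e1 l)).
Proof. intros Hh H1. exact (computable_on_comp k _ [e1] Hh ltac:(repeat constructor; auto)). Qed.

Lemma computable_on_comp2 k (h : nat -> nat -> nat) e1 e2 :
  computable_on 2 (fun l => h (nth 0 l 0) (nth 1 l 0)) ->
  computable_on k e1 -> computable_on k e2 -> computable_on k (fun l => h (e1 l) (e2 l)).
Proof.
  intros Hh H1 H2. exact (computable_on_comp k _ [e1; e2] Hh ltac:(repeat constructor; auto)).
Qed.

Lemma computable_on_comp3 k (h : nat -> nat -> nat -> nat) e1 e2 e3 :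
  computable_on 3 (fun l => h (nth 0 l 0) (nth 1 l 0) (nth 2 l 0)) ->
  computable_on k e1 -> computable_on k e2 -> computable_on k e3 ->
  computable_on k (fun l => h (e1 l) (e2 l) (e3 l)).
Proof.
  intros Hh H1 H2 H3.
  exact (computable_on_comp k _ [e1; e2; e3] Hh ltac:(repeat constructor; auto)).
Qed.

Lemma computable_on_const k c : computable_on k (fun _ => c).
Proof.
  induction c as [|c IH].
  - exists PZero. constructor.
  - exact (computable_on_comp1 k S (fun _ => c) computable_on_succ IH).
Qed.

Fixpoint prim_rec (f g : list nat -> nat) (n : nat) (args : list nat) : nat :=
  match n with 0 => f args | S m => g (m :: prim_rec f g m args :: args) end.

Lemma computable_on_prim_rec k f g :
  computable_on k f -> computable_on (S (S k)) g ->
  computable_on (S k) (fun l => prim_rec f g (hd 0 l) (tl l)).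
Proof.
  intros [pf Hf] [pg Hg]. exists (PRec pf pg). intros [|n args] Hl; simpl in Hl; [lia|].
  simpl. induction n as [|n IH]; simpl.
  - constructor. apply Hf. lia.
  - econstructor; [exact IH | apply Hg; simpl; lia].
Qed.

Lemma computable_rec1 (F : nat -> nat) (g : nat -> nat -> nat) :
  computable_on 2 (fun l => g (nth 0 l 0) (nth 1 l 0)) ->
  (forall n, F (S n) = g n (F n)) -> computable_on 1 (fun l => F (nth 0 l 0)).
Proof.
  intros Hg HF. eapply computable_on_ext;
    [|exact (computable_on_prim_rec 0 _ _ (computable_on_const 0 (F 0)) Hg)].
  intros [|n []] Hl; simpl in Hl; try lia. simpl.
  induction n as [|n IH]; simpl; [reflexivity|]. rewrite IH, HF. reflexivity.
Qed.

Lemma computable_rec2 (F : nat -> nat -> nat) (f : nat -> nat) (g : nat -> nat -> nat -> nat) :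
  computable_on 1 (fun l => f (nth 0 l 0)) ->
  computable_on 3 (fun l => g (nth 0 l 0) (nth 1 l 0) (nth 2 l 0)) ->
  (forall x, F 0 x = f x) -> (forall n x, F (S n) x = g n (F n x) x) ->
  computable_on 2 (fun l => F (nth 0 l 0) (nth 1 l 0)).
Proof.
  intros Hf Hg HF0 HFS. eapply computable_on_ext; [|exact (computable_on_prim_rec 1 _ _ Hf Hg)].
  intros [|n [|x []]] Hl; simpl in Hl; try lia. simpl.
  induction n as [|n IH]; simpl; [auto|]. rewrite IH, HFS. reflexivity.
Qed.

Create HintDb computable.

Ltac computable_leaf := solve [auto 1 with nocore computable].

(* Decomposes a function body along its syntax, closing each head symbol by a
   [computable] hint or a hypothesis. *)
Ltac computable :=
  match goal with
  | |- computable_on _ (fun _ => ?c) => apply computable_on_const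
  | |- computable_on _ (fun l => nth ?i l 0) => apply computable_on_proj; lia
  | |- computable_on ?k (fun l => ?h (@?e1 l) (@?e2 l) (@?e3 l)) =>
      refine (computable_on_comp3 k h e1 e2 e3 _ _ _ _); [computable_leaf | computable ..]
  | |- computable_on ?k (fun l => ?h (@?e1 l) (@?e2 l)) =>
      refine (computable_on_comp2 k h e1 e2 _ _ _); [computable_leaf | computable ..]
  | |- computable_on ?k (fun l => ?h (@?e1 l)) =>
      refine (computable_on_comp1 k h e1 _ _); [computable_leaf | computable]
  end.

#[local] Hint Resolve computable_on_succ : computable.

Lemma computable_add : computable_on 2 (fun l => nth 0 l 0 + nth 1 l 0).
Proof. apply (computable_rec2 _ (fun x => x) (fun _ r _ => S r)); auto; computable. Qed.
#[local] Hint Resolve computable_add : computable.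

Lemma computable_mul : computable_on 2 (fun l => nth 0 l 0 * nth 1 l 0).
Proof. apply (computable_rec2 _ (fun _ => 0) (fun _ r x => x + r)); auto; computable. Qed.
#[local] Hint Resolve computable_mul : computable.

Lemma computable_pred : computable_on 1 (fun l => pred (nth 0 l 0)).
Proof. apply (computable_rec1 _ (fun n _ => n)); auto; computable. Qed.
#[local] Hint Resolve computable_pred : computable.

Lemma computable_sub : computable_on 2 (fun l => nth 0 l 0 - nth 1 l 0).
Proof.
  assert (Hsub : computable_on 2 (fun l => nth 1 l 0 - nth 0 l 0)).
  { apply (computable_rec2 (fun n x => x - n) (fun x => x) (fun _ r _ => pred r)); try computable.
    - intros x. apply Nat.sub_0_r.
    - intros n x. lia. }
  apply (computable_on_comp2 2 (fun a b => b - a) (fun l => nth 1 l 0) (fun l => nth 0 l 0));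
    [exact Hsub | computable ..].
Qed.
#[local] Hint Resolve computable_sub : computable.

Definition nat_if (b x y : nat) : nat := match b with 0 => y | S _ => x end.
Definition nat_leb (a b : nat) : nat := nat_if (a - b) 0 1.
Definition nat_eqb (a b : nat) : nat := nat_leb a b * nat_leb b a.

Lemma computable_nat_if : computable_on 3 (fun l => nat_if (nth 0 l 0) (nth 1 l 0) (nth 2 l 0)).
Proof.
  (* [nat_if b x y = x * sg b + y * (1 - b)] with [sg b = 1 - (1 - b)] *)
  eapply computable_on_ext; [|refine (_ : computable_on 3 (fun l =>
    nth 1 l 0 * (1 - (1 - nth 0 l 0)) + nth 2 l 0 * (1 - nth 0 l 0))); computable].
  intros l _. cbv beta. destruct (nth 0 l 0); simpl; lia.
Qed.
#[local] Hint Resolve computable_nat_if : computable.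

Lemma computable_nat_leb : computable_on 2 (fun l => nat_leb (nth 0 l 0) (nth 1 l 0)).
Proof. unfold nat_leb. computable. Qed.
#[local] Hint Resolve computable_nat_leb : computable.

Lemma computable_nat_eqb : computable_on 2 (fun l => nat_eqb (nth 0 l 0) (nth 1 l 0)).
Proof. unfold nat_eqb. computable. Qed.
#[local] Hint Resolve computable_nat_eqb : computable.

Lemma nat_if_b2n (c : bool) x y : nat_if (Nat.b2n c) x y = if c then x else y.
Proof. destruct c; reflexivity. Qed.

Lemma nat_leb_spec a b : nat_leb a b = Nat.b2n (a <=? b).
Proof.
  unfold nat_leb, nat_if. destruct (a <=? b) eqn:E.
  - apply Nat.leb_le in E. replace (a - b) with 0 by lia. reflexivity.
  - apply Nat.leb_gt in E. destruct (a - b) eqn:E2; [lia|reflexivity].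
Qed.

Lemma nat_eqb_spec a b : nat_eqb a b = Nat.b2n (a =? b).
Proof.
  unfold nat_eqb. rewrite !nat_leb_spec.
  destruct (a =? b) eqn:E; [apply Nat.eqb_eq in E | apply Nat.eqb_neq in E];
  destruct (a <=? b) eqn:E1, (b <=? a) eqn:E2; simpl; auto;
  rewrite ?Nat.leb_le, ?Nat.leb_gt in *; lia.
Qed.

Fixpoint tri (s : nat) : nat := match s with 0 => 0 | S m => tri m + S m end.

Lemma tri_double s : tri s * 2 = s * (s + 1).
Proof. induction s; simpl; nia. Qed.

Lemma cpair_tri a b : cpair a b = tri (a + b) + b.
Proof. unfold cpair. rewrite <- tri_double, Nat.div_mul by lia. reflexivity. Qed.

(* Keeps conversion from evaluating [cpair] on the large constant codes below. *)
Strategy opaque [cpair].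

Lemma tri_le_mono a b : a <= b -> tri a <= tri b.
Proof. induction 1; simpl; lia. Qed.

Lemma le_tri s : s <= tri s.
Proof. induction s; simpl; lia. Qed.

Fixpoint tri_root (n : nat) : nat :=
  match n with
  | 0 => 0
  | S m => if tri (S (tri_root m)) <=? S m then S (tri_root m) else tri_root m
  end.

Lemma tri_root_spec n : tri (tri_root n) <= n < tri (S (tri_root n)).
Proof.
  induction n as [|n IH]; simpl; [lia|]. simpl in IH.
  destruct (tri (tri_root n) + S (tri_root n) <=? S n) eqn:E;
    [apply Nat.leb_le in E | apply Nat.leb_gt in E]; simpl; lia.
Qed.

Lemma tri_root_unique n s : tri s <= n < tri (S s) -> tri_root n = s.
Proof.
  intros Hs. pose proof (tri_root_spec n) as Hr.
  destruct (Nat.lt_trichotomy (tri_root n) s) as [L|[E|L]]; auto.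
  - pose proof (tri_le_mono _ _ L). lia.
  - pose proof (tri_le_mono _ _ L). lia.
Qed.

Definition unpair2 (n : nat) : nat := n - tri (tri_root n).
Definition unpair1 (n : nat) : nat := tri_root n - unpair2 n.

Lemma tri_root_cpair a b : tri_root (cpair a b) = a + b.
Proof. apply tri_root_unique. rewrite cpair_tri. simpl. lia. Qed.

Lemma unpair2_cpair a b : unpair2 (cpair a b) = b.
Proof. unfold unpair2. rewrite tri_root_cpair, cpair_tri. lia. Qed.

Lemma unpair1_cpair a b : unpair1 (cpair a b) = a.
Proof. unfold unpair1. rewrite unpair2_cpair, tri_root_cpair. lia. Qed.

Lemma cpair_unpair n : cpair (unpair1 n) (unpair2 n) = n.
Proof.
  pose proof (tri_root_spec n) as Hr. simpl in Hr. rewrite cpair_tri. unfold unpair1, unpair2.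
  replace (tri_root n - (n - tri (tri_root n)) + (n - tri (tri_root n))) with (tri_root n) by lia.
  lia.
Qed.

Lemma cpair_inj a b c d : cpair a b = cpair c d -> a = c /\ b = d.
Proof.
  intros E. split.
  - rewrite <- (unpair1_cpair a b), E. apply unpair1_cpair.
  - rewrite <- (unpair2_cpair a b), E. apply unpair2_cpair.
Qed.

Lemma cpair_ge a b : a + b <= cpair a b.
Proof. rewrite cpair_tri. pose proof (le_tri (a + b)). lia. Qed.

Lemma unpair_le n : unpair1 n <= n /\ unpair2 n <= n.
Proof. pose proof (cpair_ge (unpair1 n) (unpair2 n)) as H. rewrite cpair_unpair in H. lia. Qed.

Lemma computable_tri : computable_on 1 (fun l => tri (nth 0 l 0)).
Proof. apply (computable_rec1 _ (fun n r => r + S n)); auto; computable. Qed.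
#[local] Hint Resolve computable_tri : computable.

Lemma computable_tri_root : computable_on 1 (fun l => tri_root (nth 0 l 0)).
Proof.
  apply (computable_rec1 _ (fun n r => nat_if (nat_leb (tri (S r)) (S n)) (S r) r)); [computable|].
  intros n. simpl tri_root at 1. rewrite nat_leb_spec, nat_if_b2n. reflexivity.
Qed.
#[local] Hint Resolve computable_tri_root : computable.

Lemma computable_unpair2 : computable_on 1 (fun l => unpair2 (nth 0 l 0)).
Proof. unfold unpair2. computable. Qed.
#[local] Hint Resolve computable_unpair2 : computable.

Lemma computable_unpair1 : computable_on 1 (fun l => unpair1 (nth 0 l 0)).
Proof. unfold unpair1. computable. Qed.
#[local] Hint Resolve computable_unpair1 : computable.

Lemma computable_cpair : computable_on 2 (fun l => cpair (nth 0 l 0) (nth 1 l 0)).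
Proof.
  eapply computable_on_ext; [intros l _; symmetry; apply cpair_tri|]. computable.
Qed.
#[local] Hint Resolve computable_cpair : computable.

(** * Course-of-values recursion *)

(* [cov_table G v k] packs the values [cov_rec G v j], [j < k], into nested
   pairs, the most recent one outermost. *)
Fixpoint cov_table (G : nat -> nat -> nat -> nat) (v k : nat) : nat :=
  match k with
  | 0 => 0
  | S k' => cpair (G v k' (cov_table G v k')) (cov_table G v k')
  end.

Definition cov_rec (G : nat -> nat -> nat -> nat) (v k : nat) : nat := G v k (cov_table G v k).

Definition unpair2_iter (r x : nat) : nat := Nat.iter r unpair2 x.

Definition cov_lookup (j k h : nat) : nat := unpair1 (unpair2_iter (k - S j) h).

Lemma cov_lookup_table G v j k : j < k -> cov_lookup j k (cov_table G v k) = cov_rec G v j.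
Proof.
  intros Hjk. unfold cov_lookup, unpair2_iter.
  replace k with (S j + (k - S j)) at 2 by lia. generalize (k - S j) as r. intros r.
  assert (Nat.iter r unpair2 (cov_table G v (S j + r)) = cov_table G v (S j)) as ->.
  { induction r as [|r IH]; [rewrite Nat.add_0_r; reflexivity|].
    rewrite Nat.iter_succ_r, Nat.add_succ_r.
    change (cov_table G v (S (S j + r))) with
      (cpair (G v (S j + r) (cov_table G v (S j + r))) (cov_table G v (S j + r))).
    rewrite unpair2_cpair. exact IH. }
  simpl. apply unpair1_cpair.
Qed.

Lemma computable_unpair2_iter : computable_on 2 (fun l => unpair2_iter (nth 0 l 0) (nth 1 l 0)).
Proof. apply (computable_rec2 _ (fun x => x) (fun _ r _ => unpair2 r)); auto; computable. Qed.
#[local] Hint Resolve computable_unpair2_iter : computable.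

Lemma computable_cov_lookup :
  computable_on 3 (fun l => cov_lookup (nth 0 l 0) (nth 1 l 0) (nth 2 l 0)).
Proof. unfold cov_lookup. computable. Qed.
#[local] Hint Resolve computable_cov_lookup : computable.

Lemma computable_cov_rec G :
  computable_on 3 (fun l => G (nth 0 l 0) (nth 1 l 0) (nth 2 l 0)) ->
  computable_on 2 (fun l => cov_rec G (nth 0 l 0) (nth 1 l 0)).
Proof.
  intros HG.
  assert (Htab : computable_on 2 (fun l => cov_table G (nth 1 l 0) (nth 0 l 0))).
  { apply (computable_rec2 (fun k v => cov_table G v k) (fun _ => 0)
                            (fun k r v => cpair (G v k r) r)); auto; computable. }
  assert (Htab' : computable_on 2 (fun l => cov_table G (nth 0 l 0) (nth 1 l 0))).
  { exact (computable_on_comp2 2 (fun a b => cov_table G b a) _ _ Htab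
             (computable_on_proj 2 1 ltac:(lia)) (computable_on_proj 2 0 ltac:(lia))). }
  unfold cov_rec. computable.
Qed.

Lemma computable_cov_rec0 G :
  computable_on 3 (fun l => G (nth 0 l 0) (nth 1 l 0) (nth 2 l 0)) ->
  computable_on 1 (fun l => cov_rec G 0 (nth 0 l 0)).
Proof. intros HG. pose proof (computable_cov_rec G HG). computable. Qed.

Lemma upd_eq {A} (rho : nat -> A) i a : upd rho i a i = a.
Proof. unfold upd. rewrite Nat.eqb_refl. reflexivity. Qed.

Lemma upd_neq {A} (rho : nat -> A) i a k : k <> i -> upd rho i a k = rho k.
Proof. intros H. unfold upd. apply Nat.eqb_neq in H. rewrite H. reflexivity. Qed.

Lemma upd_agree {A} (bd : nat -> Prop) (rho rho' : nat -> A) i a :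
  (forall k, bd k -> rho k = rho' k) ->
  forall k, k = i \/ bd k -> upd rho i a k = upd rho' i a k.
Proof.
  intros H k Hk. destruct (Nat.eq_dec k i) as [->|Hki]; [rewrite !upd_eq; reflexivity|].
  rewrite !upd_neq by exact Hki. apply H. destruct Hk; [contradiction|assumption].
Qed.

Lemma teval_agree bn t rho rho' :
  tvars_in bn t -> (forall k, bn k -> rho k = rho' k) -> teval rho t = teval rho' t.
Proof. induction t; simpl; intros Ht Hr; [auto | destruct Ht; f_equal; auto ..]. Qed.

Lemma asat_agree p : forall bn bs rho rho' sg sg',
  afree_in bn bs p -> (forall k, bn k -> rho k = rho' k) -> (forall k, bs k -> sg k = sg' k) ->
  (asat rho sg p <-> asat rho' sg' p).
Proof.
  induction p as [s t|t j|q IH|q IHq r IHr|q IHq r IHr|q IHq r IHr|i q IH|i q IH|i q IH|i q IH];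
    cbn [afree_in asat]; intros bn bs rho rho' sg sg' Hf Hr Hs.
  7-10: first
    [ assert (Hq : forall m, asat (upd rho i m) sg q <-> asat (upd rho' i m) sg' q)
        by (intros m; eapply IH; eauto using upd_agree)
    | assert (Hq : forall S, asat rho (upd sg i S) q <-> asat rho' (upd sg' i S) q)
        by (intros S; eapply IH; eauto using upd_agree) ];
    setoid_rewrite Hq; reflexivity.
  4-6: destruct Hf; rewrite (IHq bn bs rho rho' sg sg'), (IHr bn bs rho rho' sg sg') by auto; tauto.
  - destruct Hf. rewrite (teval_agree bn s rho rho'), (teval_agree bn t rho rho') by auto. tauto.
  - destruct Hf. rewrite (teval_agree bn t rho rho'), Hs by auto. tauto.
  - rewrite (IH bn bs rho rho' sg sg') by auto. tauto.
Qed.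

Lemma asat_sentence q rho rho' sg sg' : asentence q -> (asat rho sg q <-> asat rho' sg' q).
Proof. intros Hq. apply (asat_agree q _ _ _ _ _ _ Hq); intros k []. Qed.

Lemma tvars_in_mono (bn bn' : nat -> Prop) t :
  (forall k, bn k -> bn' k) -> tvars_in bn t -> tvars_in bn' t.
Proof. induction t; simpl; intuition. Qed.

Lemma afree_in_mono p : forall bn bs bn' bs' : nat -> Prop,
  (forall k, bn k -> bn' k) -> (forall k, bs k -> bs' k) -> afree_in bn bs p -> afree_in bn' bs' p.
Proof.
  induction p; simpl; intros bn bs bn' bs' Hn Hs Hf; intuition (eauto using tvars_in_mono).
  all: eapply IHp; [| |eassumption]; simpl; intuition.
Qed.

Lemma lsat_ext {X} (opn : (X -> Prop) -> Prop) p : forall rho rho',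
  (forall j x, rho j x <-> rho' j x) -> (lsat opn rho p <-> lsat opn rho' p).
Proof.
  induction p as [i j|i j|q IH|q IHq r IHr|q IHq r IHr|q IHq r IHr|i q IH|i q IH];
    cbn [lsat]; intros rho rho' H; unfold subset.
  7-8: assert (Hq : forall U, lsat opn (upd rho i U) q <-> lsat opn (upd rho' i U) q)
         by (intros U; apply IH; intros j x; unfold upd; destruct (j =? i); [reflexivity|apply H]);
       setoid_rewrite Hq; reflexivity.
  4-6: rewrite (IHq rho rho'), (IHr rho rho'); tauto.
  1-2: setoid_rewrite H; reflexivity.
  rewrite (IH rho rho'); tauto.
Qed.

Lemma lsat_upd_ext {X} (opn : (X -> Prop) -> Prop) p rho i (U V : X -> Prop) :
  (forall x, U x <-> V x) -> lsat opn (upd rho i U) p -> lsat opn (upd rho i V) p.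
Proof.
  intros HUV H. refine (proj1 (lsat_ext opn p _ _ _) H).
  intros j x. unfold upd. destruct (j =? i); [apply HUV | reflexivity].
Qed.

(** * Definability in second-order arithmetic *)

Definition zero_form (z : nat) : aform := AEq (TAdd (TVar z) (TVar z)) (TVar z).
Definition one_form (o w : nat) : aform := AAllN w (AEq (TMul (TVar w) (TVar o)) (TVar w)).

(* Injective, and simpler to express than Cantor's pairing. *)
Definition tpair (x y : aterm) : aterm := TAdd (TMul (TAdd x y) (TAdd x y)) x.
Definition npair (x y : nat) : nat := (x + y) * (x + y) + x.

Lemma npair_inj x y x' y' : npair x y = npair x' y' -> x = x' /\ y = y'.
Proof.
  unfold npair. intros H.
  destruct (Nat.lt_trichotomy (x + y) (x' + y')) as [L|[E|L]].
  - assert ((x + y + 1) * (x + y + 1) <= (x' + y') * (x' + y'))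
      by (apply Nat.mul_le_mono; lia). nia.
  - rewrite E in H. lia.
  - assert ((x' + y' + 1) * (x' + y' + 1) <= (x + y) * (x + y))
      by (apply Nat.mul_le_mono; lia). nia.
Qed.

(* [pow2_form kv ev] says [ev = 2 ^ kv]: the pair [(kv, ev)] lies in every set
   containing [(0, 1)] and closed under [(k, e) |-> (k + 1, e + e)]; the set
   variable 0 and the number variables 20-23 are bound inside. *)
Definition pow2_form (kv ev : nat) : aform :=
  AAllS 0 (AImp
    (AAnd (AAllN 20 (AAllN 21 (AImp (AAnd (zero_form 20) (one_form 21 22))
                                   (AMem (tpair (TVar 20) (TVar 21)) 0))))
          (AAllN 20 (AAllN 21 (AAllN 23
            (AImp (AAnd (AMem (tpair (TVar 20) (TVar 21)) 0) (one_form 23 22))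
                  (AMem (tpair (TAdd (TVar 20) (TVar 23)) (TAdd (TVar 21) (TVar 21))) 0))))))
    (AMem (tpair (TVar kv) (TVar ev)) 0)).

Lemma pow2_form_sem rho sg kv ev : asat rho sg (pow2_form kv ev) <-> rho ev = 2 ^ rho kv.
Proof.
  unfold pow2_form, zero_form, one_form, tpair. cbn [asat teval]. unfold upd. cbn [Nat.eqb].
  fold (npair (rho kv) (rho ev)).
  split.
  - intros H. set (graph := fun w => exists x, w = npair x (2 ^ x)).
    destruct (H graph) as [x Hx].
    + split.
      * intros m m0 [Hm Hm0]. exists 0. specialize (Hm0 1). unfold npair. simpl. nia.
      * intros m m0 m1 [[x Hx] H1]. specialize (H1 1). exists (S x).
        apply npair_inj in Hx as [-> ->]. unfold npair. simpl. nia.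
    + apply npair_inj in Hx as [-> ->]. reflexivity.
  - intros -> A [H0 HS]. generalize (rho kv) as k. intros k. induction k as [|k IH].
    + apply (H0 0 1). split; intros; lia.
    + specialize (HS k (2 ^ k) 1). unfold npair in *.
      replace (S k + 2 ^ S k) with (k + 1 + (2 ^ k + 2 ^ k)) by (simpl; lia).
      replace (S k) with (k + 1) by lia.
      apply HS. split; [exact IH | intros; lia].
Qed.

Lemma testbit_iff n k : Nat.testbit n k = true <->
  exists q r, r < 2 ^ k /\ n = q * (2 ^ k + 2 ^ k) + (2 ^ k + r).
Proof.
  assert (Hp : 2 ^ k <> 0) by (apply Nat.pow_nonzero; lia).
  pose proof (Nat.testbit_spec' n k) as Hs.
  split.
  - intros Ht. rewrite Ht in Hs. change (Nat.b2n true) with 1 in Hs.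
    pose proof (Nat.div_mod n (2 ^ k) Hp) as E1.
    pose proof (Nat.mod_upper_bound n (2 ^ k) Hp) as B1.
    pose proof (Nat.div_mod (n / 2 ^ k) 2 ltac:(lia)) as E2.
    exists (n / 2 ^ k / 2), (n mod 2 ^ k). split; [exact B1|]. rewrite <- Hs in E2. nia.
  - intros (q & r & Hr & Hn).
    assert (Hd : n / 2 ^ k = 1 + q * 2).
    { symmetry. apply (Nat.div_unique n (2 ^ k) (1 + q * 2) r); [exact Hr | nia]. }
    rewrite Hd, Nat.Div0.mod_add in Hs.
    destruct (Nat.testbit n k); [reflexivity | discriminate].
Qed.

(* Bit [x3] of [x1] is set iff [x1 = q * 2 ^ (x3 + 1) + 2 ^ x3 + r] with
   [r < 2 ^ x3]; the variables 10-15 are bound inside. *)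
Definition testbit_form : aform :=
  AExN 10 (AExN 11 (AExN 12 (AExN 13 (AExN 14 (AAnd (pow2_form 3 10)
  (AAnd (one_form 14 15)
  (AAnd (AEq (TVar 1) (TAdd (TMul (TVar 11) (TAdd (TVar 10) (TVar 10))) (TAdd (TVar 10) (TVar 12))))
        (AEq (TAdd (TAdd (TVar 12) (TVar 13)) (TVar 14)) (TVar 10))))))))).

Lemma testbit_form_sem rho sg : asat rho sg testbit_form <-> Nat.testbit (rho 1) (rho 3) = true.
Proof.
  unfold testbit_form, one_form. cbn [asat teval]. setoid_rewrite pow2_form_sem.
  unfold upd. cbn [Nat.eqb]. rewrite testbit_iff. split.
  - intros (e & q & r & d & o & -> & Ho & Hn & Hd). specialize (Ho 1).
    exists q, r. split; [lia|]. rewrite Hn. lia.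
  - intros (q & r & Hr & Hn). exists (2 ^ rho 3), q, r, (2 ^ rho 3 - r - 1), 1.
    repeat split; auto; lia.
Qed.

(** * Open sets as saturated sets of basic indices *)

Section Saturation.

Context {X : Type} (opn : (X -> Prop) -> Prop) (beta kappa : nat -> X -> Prop).

Definition basic_union (A : nat -> Prop) : X -> Prop := fun x => exists a, A a /\ beta a x.

Definition basic_inside (U : X -> Prop) : nat -> Prop := fun a => subset (beta a) U.

Definition saturated (A : nat -> Prop) : Prop :=
  forall a, subset (beta a) (basic_union A) -> A a.

Definition kappa_covered (i n : nat) : Prop := subset (kappa i) (basic_union (D n)).

Lemma kappa_covered_pow2 i a : kappa_covered i (2 ^ a) <-> subset (kappa i) (beta a).
Proof.
  unfold kappa_covered, basic_union, subset, D. setoid_rewrite Nat.pow2_bits_eqb. split.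
  - intros H x Hx. destruct (H x Hx) as [b [Hb Hbx]]. apply Nat.eqb_eq in Hb. subst b. exact Hbx.
  - intros H x Hx. exists a. rewrite Nat.eqb_refl. auto.
Qed.

Lemma basic_inside_saturated U : saturated (basic_inside U).
Proof. intros a H x Hx. destruct (H x Hx) as [b [Hb Hbx]]. exact (Hb x Hbx). Qed.

Lemma basic_union_subset_iff A B :
  saturated B -> (subset (basic_union A) (basic_union B) <-> forall a, A a -> B a).
Proof.
  intros HB. split.
  - intros H a Ha. apply HB. intros x Hx. apply H. exists a. auto.
  - intros H x [a [Ha Hx]]. exists a. auto.
Qed.

Lemma finite_basic_family_code (A : nat -> Prop) (l : list (X -> Prop)) :
  (forall U, In U l -> exists b, A b /\ U = beta b) ->
  exists n, (forall b, D n b -> A b) /\ (forall U, In U l -> exists b, D n b /\ U = beta b).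
Proof.
  unfold D. induction l as [|U l IH]; intros Hl.
  - exists 0. split; [intros b; rewrite Nat.bits_0; discriminate | intros U []].
  - destruct (Hl U (or_introl eq_refl)) as [b [Hb ->]].
    destruct IH as [n [Hn HnU]]; [intros V HV; apply Hl; right; exact HV|].
    exists (Nat.setbit n b). split.
    + intros c Hc. apply Nat.setbit_iff in Hc as [<-|Hc]; auto.
    + intros V [<-|HV].
      * exists b. rewrite Nat.setbit_eq. auto.
      * destruct (HnU V HV) as [c [Hc ->]]. exists c. rewrite Nat.setbit_iff. auto.
Qed.

Hypothesis Htop : is_topology opn.
Hypothesis Hbase : is_base opn beta.
Hypothesis Hcompact : forall i, compact opn (kappa i).
Hypothesis Hkappa_union :
  forall n, exists S : nat -> Prop, forall x, beta n x <-> exists i, S i /\ kappa i x.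

Lemma basic_union_open A : opn (basic_union A).
Proof.
  destruct Hbase as [Hbeta _].
  apply (top_ext _ Htop (fun x => exists U, (exists a, A a /\ U = beta a) /\ U x)).
  - intros x. split.
    + intros [U [[a [Ha ->]] Hx]]. exists a. auto.
    + intros [a [Ha Hx]]. exists (beta a). eauto.
  - apply top_union; [exact Htop|]. intros U [a [_ ->]]. apply Hbeta.
Qed.

Lemma basic_union_inside U : opn U -> forall x, basic_union (basic_inside U) x <-> U x.
Proof.
  destruct Hbase as [_ Hnbhd]. intros HU x. split.
  - intros [a [Ha Hx]]. exact (Ha x Hx).
  - intros Hx. destruct (Hnbhd U HU x Hx) as [a [Hax HaU]]. exists a. auto.
Qed.

(* [kappa_covered i (2 ^ a)] encodes [kappa i ⊆ beta a]; this is where local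
   compactness enters. *)
Lemma basic_covered_iff A a :
  (forall i, kappa_covered i (2 ^ a) ->
     exists n, kappa_covered i n /\ forall b, D n b -> A b) <->
  subset (beta a) (basic_union A).
Proof.
  destruct Hbase as [Hbeta _]. split.
  - intros H x Hx. destruct (Hkappa_union a) as [S HS].
    destruct (proj1 (HS x) Hx) as [i [Hi Hix]].
    assert (Hia : subset (kappa i) (beta a)) by (intros y Hy; apply HS; eauto).
    apply kappa_covered_pow2 in Hia. destruct (H i Hia) as [n [Hn HnA]].
    destruct (Hn x Hix) as [b [Hb Hbx]]. exists b. auto.
  - intros H i Hi. apply kappa_covered_pow2 in Hi.
    destruct (Hcompact i (fun U => exists b, A b /\ U = beta b)) as [l [Hl Hcov]].
    + intros U [b [_ ->]]. apply Hbeta.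
    + intros x Hx. destruct (H x (Hi x Hx)) as [b [Hb Hbx]]. exists (beta b). eauto.
    + destruct (finite_basic_family_code A l Hl) as [n [HnA Hnl]]. exists n. split; [|exact HnA].
      intros x Hx. destruct (Hcov x Hx) as [U [HU HUx]]. destruct (Hnl U HU) as [b [Hb ->]].
      exists b. auto.
Qed.

Lemma forall_saturated_iff (P : (X -> Prop) -> Prop) :
  (forall U V, (forall x, U x <-> V x) -> P U -> P V) ->
  (forall A, saturated A -> P (basic_union A)) <-> (forall U, opn U -> P U).
Proof.
  intros HP. split.
  - intros H U HU. apply (HP (basic_union (basic_inside U))).
    + apply basic_union_inside, HU.
    + apply H, basic_inside_saturated.
  - intros H A _. apply H, basic_union_open.
Qed.

Lemma exists_saturated_iff (P : (X -> Prop) -> Prop) :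
  (forall U V, (forall x, U x <-> V x) -> P U -> P V) ->
  (exists A, saturated A /\ P (basic_union A)) <-> (exists U, opn U /\ P U).
Proof.
  intros HP. split.
  - intros [A [_ HA]]. exists (basic_union A). split; [apply basic_union_open | exact HA].
  - intros [U [HU HPU]]. exists (basic_inside U). split; [apply basic_inside_saturated|].
    apply (HP U); [|exact HPU]. intros x. symmetry. apply basic_union_inside, HU.
Qed.

End Saturation.

(** * Translation into second-order arithmetic *)

(* With [pK] defining [kappa_covered] in the variables 0 and 1, this says that
   every [a] (variable 2) such that each [kappa i] inside [beta a] is covered by
   some [D n] contained in the set [s] belongs to [s]. *)
Definition saturated_form (pK : aform) (s : nat) : aform :=
  AAllN 2 (AImp
    (AAllN 0 (AImp (AExN 1 (AAnd (pow2_form 2 1) pK))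
                   (AExN 1 (AAnd pK (AAllN 3 (AImp testbit_form (AMem (TVar 3) s)))))))
    (AMem (TVar 2) s)).

Definition subset_form (i j : nat) : aform := AAllN 0 (AImp (AMem (TVar 0) i) (AMem (TVar 0) j)).

Lemma subset_form_sem rho sg i j : asat rho sg (subset_form i j) <-> forall a, sg i a -> sg j a.
Proof. unfold subset_form. cbn [asat teval]. setoid_rewrite upd_eq. reflexivity. Qed.

Fixpoint translate (pK : aform) (p : lform) : aform :=
  match p with
  | LSub i j => subset_form i j
  | LEq i j => AAnd (subset_form i j) (subset_form j i)
  | LNot q => ANot (translate pK q)
  | LAnd q r => AAnd (translate pK q) (translate pK r)
  | LOr q r => AOr (translate pK q) (translate pK r)
  | LImp q r => AImp (translate pK q) (translate pK r)
  | LAll i q => AAllS i (AImp (saturated_form pK i) (translate pK q))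
  | LEx i q => AExS i (AAnd (saturated_form pK i) (translate pK q))
  end.

Lemma saturated_form_free pK (bn bs : nat -> Prop) s :
  afree_in (fun k => k = 0 \/ k = 1) (fun _ => False) pK -> bs s ->
  afree_in bn bs (saturated_form pK s).
Proof.
  intros HpK Hs. unfold saturated_form, pow2_form, testbit_form, zero_form, one_form, tpair.
  cbn [afree_in tvars_in].
  repeat split;
    try (eapply afree_in_mono; [| |exact HpK]; intros k Hk;
         [destruct Hk as [-> | ->]; tauto | contradiction]);
    repeat (first [left; reflexivity | right]); auto.
Qed.

Lemma translate_free pK (bn : nat -> Prop) p :
  afree_in (fun k => k = 0 \/ k = 1) (fun _ => False) pK ->
  forall bd, lfree_in bd p -> afree_in bn bd (translate pK p).
Proof.
  intros HpK. induction p; intros bd Hp; cbn [translate lfree_in] in *;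
    unfold subset_form; cbn [afree_in tvars_in]; intuition.
  all: apply saturated_form_free; auto.
Qed.

Section Translation.

Context {X : Type} (opn : (X -> Prop) -> Prop) (beta kappa : nat -> X -> Prop) (pK : aform).

Hypothesis Htop : is_topology opn.
Hypothesis Hbase : is_base opn beta.
Hypothesis Hcompact : forall i, compact opn (kappa i).
Hypothesis Hkappa_union :
  forall n, exists S : nat -> Prop, forall x, beta n x <-> exists i, S i /\ kappa i x.
Hypothesis HpK_free : afree_in (fun k => k = 0 \/ k = 1) (fun _ => False) pK.
Hypothesis HpK : forall i n, kappa_covered beta kappa i n <->
  asat (upd (upd (fun _ => 0) 0 i) 1 n) (fun _ _ => False) pK.

Lemma pK_sem rho sg : asat rho sg pK <-> kappa_covered beta kappa (rho 0) (rho 1).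
Proof.
  rewrite HpK. apply (asat_agree pK _ _ _ _ _ _ HpK_free); [|intros k []].
  intros k [-> | ->]; reflexivity.
Qed.

Lemma saturated_form_sem rho sg s : asat rho sg (saturated_form pK s) <-> saturated beta (sg s).
Proof.
  unfold saturated_form. cbn [asat teval].
  setoid_rewrite pK_sem. setoid_rewrite pow2_form_sem. setoid_rewrite testbit_form_sem.
  unfold upd. cbn [Nat.eqb]. unfold saturated.
  setoid_rewrite <- (basic_covered_iff opn beta kappa Hbase Hcompact Hkappa_union).
  split.
  - intros H a Ha. apply (H a). intros i [n [-> Hi]]. exact (Ha i Hi).
  - intros H a Ha. apply (H a). intros i Hi. apply (Ha i). exists (2 ^ a). auto.
Qed.

Lemma translate_sem p : forall rho sg, (forall j, saturated beta (sg j)) ->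
  (asat rho sg (translate pK p) <-> lsat opn (fun j => basic_union beta (sg j)) p).
Proof.
  induction p as [i j|i j|q IH|q IHq r IHr|q IHq r IHr|q IHq r IHr|i q IH|i q IH];
    intros rho sg Hsat; cbn [translate asat lsat teval].
  7-8:
    set (rho' := fun j => basic_union beta (sg j));
    assert (Hq : forall A, saturated beta A ->
              asat rho (upd sg i A) (translate pK q) <->
              lsat opn (upd rho' i (basic_union beta A)) q)
      by (intros A HA; rewrite IH by (intros j; unfold upd; destruct (j =? i); auto);
          apply lsat_ext; intros j x; unfold upd, rho'; destruct (j =? i); reflexivity);
    pose proof (lsat_upd_ext opn q rho' i) as Hext;
    setoid_rewrite saturated_form_sem; setoid_rewrite upd_eq;
    first
      [ rewrite <- (forall_saturated_iff opn beta Htop Hbase _ Hext);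
        split; intros H A HA; apply Hq; auto
      | rewrite <- (exists_saturated_iff opn beta Htop Hbase _ Hext);
        split; intros [A [HA HqA]]; exists A; split; auto; apply Hq; auto ].
  4-6: rewrite IHq, IHr by exact Hsat; tauto.
  - rewrite subset_form_sem, basic_union_subset_iff by auto. reflexivity.
  - assert (Hsub : forall A B : X -> Prop, (forall x, A x <-> B x) <-> subset A B /\ subset B A)
      by (unfold subset; firstorder).
    rewrite Hsub, !subset_form_sem, !basic_union_subset_iff by auto. reflexivity.
  - rewrite IH by exact Hsat. tauto.
Qed.

Lemma translate_sentence_sem p : lsentence p ->
  asat (fun _ => 0) (fun _ _ => False) (translate pK p) <->
  forall rho, (forall k, opn (rho k)) -> lsat opn rho p.
Proof.
  intros Hp. pose proof (translate_free pK (fun _ => False) p HpK_free _ Hp) as Hs.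
  split.
  - intros H rho Hrho.
    rewrite (asat_sentence _ _ (fun _ => 0) _ (fun j => basic_inside beta (rho j)) Hs),
      translate_sem in H by (intros j; apply basic_inside_saturated).
    refine (proj1 (lsat_ext opn p _ _ _) H).
    intros j x. apply (basic_union_inside opn beta Hbase), Hrho.
  - intros H.
    rewrite (asat_sentence _ _ (fun _ => 0) _ (fun _ => basic_inside beta (fun _ => False)) Hs),
      translate_sem by (intros j; apply basic_inside_saturated).
    apply H. intros k. apply basic_union_open; assumption.
Qed.

End Translation.

(** * Computing on codes *)

(* Without keyed matching, a failing [rewrite] would unfold the constant codes
   below while looking for an instance. *)
Set Keyed Unification.

Lemma tcode_inj s t : tcode s = tcode t -> s = t.
Proof.
  revert t. induction s; destruct t; cbn [tcode]; intros H; apply cpair_inj in H as [H1 H2];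
    try discriminate; [subst; reflexivity | ..];
    apply cpair_inj in H2 as [H2 H3]; f_equal; auto.
Qed.

Lemma acode_inj p q : acode p = acode q -> p = q.
Proof.
  revert q. induction p; destruct q; cbn [acode]; intros H; apply cpair_inj in H as [H1 H2];
    try discriminate; try (f_equal; auto; fail);
    apply cpair_inj in H2 as [H2 H3]; f_equal; auto using tcode_inj.
Qed.

Ltac cpair_bounds :=
  repeat match goal with
  | |- context [cpair ?a ?b] =>
      lazymatch goal with
      | _ : a + b <= cpair a b |- _ => fail
      | _ => pose proof (cpair_ge a b)
      end
  end.

Definition code_tag (n : nat) : nat := unpair1 n.
Definition code_arg1 (n : nat) : nat := unpair1 (unpair2 n).
Definition code_arg2 (n : nat) : nat := unpair2 (unpair2 n).

Lemma computable_code_tag : computable_on 1 (fun l => code_tag (nth 0 l 0)).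
Proof. unfold code_tag. computable. Qed.
Lemma computable_code_arg1 : computable_on 1 (fun l => code_arg1 (nth 0 l 0)).
Proof. unfold code_arg1. computable. Qed.
Lemma computable_code_arg2 : computable_on 1 (fun l => code_arg2 (nth 0 l 0)).
Proof. unfold code_arg2. computable. Qed.
#[local] Hint Resolve computable_code_tag computable_code_arg1 computable_code_arg2 : computable.

(* Unfolds one step of a course-of-values recursion on a code [cpair t x] with
   a literal tag [t], reading the recursive values off the table. *)
Ltac code_step step :=
  unfold cov_rec at 1; unfold step at 1; unfold code_tag, code_arg1, code_arg2;
  repeat rewrite ?unpair1_cpair, ?unpair2_cpair;
  cbn [nat_if nat_leb nat_eqb Nat.sub Nat.mul Nat.add];
  repeat rewrite cov_lookup_table by (cpair_bounds; lia).

Definition lcode_test_step (_ k h : nat) : nat :=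
  nat_if (nat_leb (code_tag k) 1) 1
  (nat_if (nat_eqb (code_tag k) 2) (cov_lookup (unpair2 k) k h)
  (nat_if (nat_leb (code_tag k) 5) (cov_lookup (code_arg1 k) k h * cov_lookup (code_arg2 k) k h)
  (nat_if (nat_leb (code_tag k) 7) (cov_lookup (code_arg2 k) k h) 0))).

(* Nonzero exactly on codes of formulas. *)
Definition lcode_test (n : nat) : nat := cov_rec lcode_test_step 0 n.

Lemma lcode_test_lcode p : lcode_test (lcode p) <> 0.
Proof.
  unfold lcode_test. induction p; cbn [lcode]; code_step lcode_test_step; auto.
  all: apply Nat.neq_mul_0; auto.
Qed.

Lemma lcode_test_sound n : lcode_test n <> 0 -> exists p, lcode p = n.
Proof.
  induction n as [n IH] using lt_wf_ind. intros Hn.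
  rewrite <- (cpair_unpair n) in IH, Hn |- *.
  set (t := unpair1 n) in *. set (x := unpair2 n) in *. clearbody t x.
  destruct (unpair_le x) as [Hx1 Hx2].
  assert (Hrec : forall m, m <= x -> 0 < t -> lcode_test m <> 0 -> exists q, lcode q = m)
    by (intros m Hm Ht; apply IH; cpair_bounds; lia).
  unfold lcode_test in Hn.
  unfold cov_rec at 1, lcode_test_step at 1, code_tag, code_arg1, code_arg2 in Hn.
  rewrite unpair1_cpair, unpair2_cpair in Hn.
  destruct t as [|[|[|[|[|[|[|[|t]]]]]]]];
    cbn [nat_if nat_leb nat_eqb Nat.sub Nat.mul Nat.add] in Hn;
    repeat rewrite cov_lookup_table in Hn by (cpair_bounds; lia);
    fold (lcode_test x) (lcode_test (unpair1 x)) (lcode_test (unpair2 x)) in Hn.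
  - exists (LSub (unpair1 x) (unpair2 x)). cbn [lcode]. rewrite cpair_unpair. reflexivity.
  - exists (LEq (unpair1 x) (unpair2 x)). cbn [lcode]. rewrite cpair_unpair. reflexivity.
  - destruct (Hrec x ltac:(lia) ltac:(lia) Hn) as [q Hq].
    exists (LNot q). cbn [lcode]. rewrite Hq. reflexivity.
  - apply Nat.neq_mul_0 in Hn as [H1 H2].
    destruct (Hrec _ Hx1 ltac:(lia) H1) as [q Hq], (Hrec _ Hx2 ltac:(lia) H2) as [r Hr].
    exists (LAnd q r). cbn [lcode]. rewrite Hq, Hr, cpair_unpair. reflexivity.
  - apply Nat.neq_mul_0 in Hn as [H1 H2].
    destruct (Hrec _ Hx1 ltac:(lia) H1) as [q Hq], (Hrec _ Hx2 ltac:(lia) H2) as [r Hr].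
    exists (LOr q r). cbn [lcode]. rewrite Hq, Hr, cpair_unpair. reflexivity.
  - apply Nat.neq_mul_0 in Hn as [H1 H2].
    destruct (Hrec _ Hx1 ltac:(lia) H1) as [q Hq], (Hrec _ Hx2 ltac:(lia) H2) as [r Hr].
    exists (LImp q r). cbn [lcode]. rewrite Hq, Hr, cpair_unpair. reflexivity.
  - destruct (Hrec _ Hx2 ltac:(lia) Hn) as [q Hq].
    exists (LAll (unpair1 x) q). cbn [lcode]. rewrite Hq, cpair_unpair. reflexivity.
  - destruct (Hrec _ Hx2 ltac:(lia) Hn) as [q Hq].
    exists (LEx (unpair1 x) q). cbn [lcode]. rewrite Hq, cpair_unpair. reflexivity.
  - exfalso. apply Hn. reflexivity.
Qed.

Lemma computable_lcode_test : computable_on 1 (fun l => lcode_test (nth 0 l 0)).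
Proof. apply computable_cov_rec0. unfold lcode_test_step. computable. Qed.
#[local] Hint Resolve computable_lcode_test : computable.

Fixpoint occurs_freeb (v : nat) (p : lform) : bool :=
  match p with
  | LSub i j | LEq i j => (i =? v) || (j =? v)
  | LNot q => occurs_freeb v q
  | LAnd q r | LOr q r | LImp q r => occurs_freeb v q || occurs_freeb v r
  | LAll i q | LEx i q => if i =? v then false else occurs_freeb v q
  end.

Lemma lfree_in_iff p : forall bd, lfree_in bd p <-> forall v, occurs_freeb v p = true -> bd v.
Proof.
  induction p as [i j|i j|q IH|q IHq r IHr|q IHq r IHr|q IHq r IHr|i q IH|i q IH];
    intros bd; cbn [lfree_in occurs_freeb].
  7-8: rewrite IH; split;
    [ intros H v Hv; destruct (Nat.eqb_spec i v); [discriminate|];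
      destruct (H v Hv); [congruence | assumption]
    | intros H v Hv; destruct (Nat.eq_dec v i) as [->|Hvi]; [left; reflexivity | right];
      apply H; destruct (Nat.eqb_spec i v); [congruence | exact Hv] ].
  4-6: rewrite IHq, IHr; setoid_rewrite Bool.orb_true_iff; firstorder.
  1-2: setoid_rewrite Bool.orb_true_iff; setoid_rewrite Nat.eqb_eq; firstorder congruence.
  apply IH.
Qed.

Lemma occurs_freeb_le v p : occurs_freeb v p = true -> v <= lcode p.
Proof.
  induction p; cbn [occurs_freeb lcode]; intros H; cpair_bounds;
    repeat match goal with
    | H : (_ || _)%bool = true |- _ => apply Bool.orb_true_iff in H as [H|H]
    | H : (_ =? _) = true |- _ => apply Nat.eqb_eq in H
    | H : (if ?c then _ else _) = true |- _ => destruct c; [discriminate|]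
    | IH : ?b = true -> _, H : ?b = true |- _ => specialize (IH H)
    end; lia.
Qed.

Definition occurs_free_step (v k h : nat) : nat :=
  nat_if (nat_leb (code_tag k) 1) (nat_if (nat_eqb (code_arg1 k) v) 1 (nat_eqb (code_arg2 k) v))
  (nat_if (nat_eqb (code_tag k) 2) (cov_lookup (unpair2 k) k h)
  (nat_if (nat_leb (code_tag k) 5)
     (nat_if (cov_lookup (code_arg1 k) k h) 1 (cov_lookup (code_arg2 k) k h))
  (nat_if (nat_leb (code_tag k) 7)
     (nat_if (nat_eqb (code_arg1 k) v) 0 (cov_lookup (code_arg2 k) k h)) 0))).

(* Nonzero exactly when [v] occurs free in the formula coded by [n]. *)
Definition occurs_free_code (v n : nat) : nat := cov_rec occurs_free_step v n.

Lemma occurs_free_code_lcode v p : occurs_free_code v (lcode p) = Nat.b2n (occurs_freeb v p).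
Proof.
  unfold occurs_free_code. induction p; cbn [lcode occurs_freeb]; code_step occurs_free_step;
    rewrite ?nat_eqb_spec, ?IHp, ?IHp1, ?IHp2;
    repeat match goal with |- context [?a =? ?b] => destruct (a =? b) end;
    repeat match goal with |- context [occurs_freeb ?a ?b] => destruct (occurs_freeb a b) end;
    reflexivity.
Qed.

Lemma computable_occurs_free_code :
  computable_on 2 (fun l => occurs_free_code (nth 0 l 0) (nth 1 l 0)).
Proof. apply computable_cov_rec. unfold occurs_free_step. computable. Qed.
#[local] Hint Resolve computable_occurs_free_code : computable.

Fixpoint free_count (m n : nat) : nat :=
  match m with 0 => 0 | S m' => free_count m' n + occurs_free_code m' n end.

Lemma computable_free_count : computable_on 2 (fun l => free_count (nth 0 l 0) (nth 1 l 0)).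
Proof.
  apply (computable_rec2 _ (fun _ => 0) (fun m r n => r + occurs_free_code m n)); auto; computable.
Qed.
#[local] Hint Resolve computable_free_count : computable.

Lemma free_count_zero m n : free_count m n = 0 <-> forall v, v < m -> occurs_free_code v n = 0.
Proof.
  induction m as [|m IH]; cbn [free_count]; [split; [intros _ v Hv; lia | reflexivity]|].
  rewrite Nat.eq_add_0, IH. split.
  - intros [H1 H2] v Hv. destruct (Nat.eq_dec v m) as [->|Hvm]; [exact H2 | apply H1; lia].
  - intros H. split; [intros v Hv; apply H; lia | apply H; lia].
Qed.

(* A free variable of a formula is bounded by its code. *)
Lemma lsentence_free_count p : lsentence p <-> free_count (S (lcode p)) (lcode p) = 0.
Proof.
  unfold lsentence. rewrite lfree_in_iff, free_count_zero.
  setoid_rewrite occurs_free_code_lcode. split.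
  - intros H v _. destruct (occurs_freeb v p) eqn:E; [destruct (H v E) | reflexivity].
  - intros H v Hv. pose proof (occurs_freeb_le v p Hv). specialize (H v ltac:(lia)).
    rewrite Hv in H. discriminate.
Qed.

Definition subset_form_code (i j : nat) : nat := acode (subset_form i j).
Definition saturated_form_code (pK : aform) (s : nat) : nat := acode (saturated_form pK s).

Lemma computable_subset_form_code :
  computable_on 2 (fun l => subset_form_code (nth 0 l 0) (nth 1 l 0)).
Proof. unfold subset_form_code, subset_form. cbn [acode tcode]. computable. Qed.

Lemma computable_saturated_form_code pK :
  computable_on 1 (fun l => saturated_form_code pK (nth 0 l 0)).
Proof. unfold saturated_form_code, saturated_form. cbn [acode tcode]. computable. Qed.
#[local] Hint Resolve computable_subset_form_code computable_saturated_form_code : computable.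

(* The tags 3, 4, 5 of the binary connectives agree in [lcode] and [acode]. *)
Definition translate_step (pK : aform) (_ k h : nat) : nat :=
  nat_if (nat_eqb (code_tag k) 0) (subset_form_code (code_arg1 k) (code_arg2 k))
  (nat_if (nat_eqb (code_tag k) 1)
     (cpair 3 (cpair (subset_form_code (code_arg1 k) (code_arg2 k))
                     (subset_form_code (code_arg2 k) (code_arg1 k))))
  (nat_if (nat_eqb (code_tag k) 2) (cpair 2 (cov_lookup (unpair2 k) k h))
  (nat_if (nat_leb (code_tag k) 5)
     (cpair (code_tag k) (cpair (cov_lookup (code_arg1 k) k h) (cov_lookup (code_arg2 k) k h)))
  (nat_if (nat_eqb (code_tag k) 6)
     (cpair 8 (cpair (code_arg1 k)
        (cpair 5 (cpair (saturated_form_code pK (code_arg1 k)) (cov_lookup (code_arg2 k) k h)))))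
  (nat_if (nat_eqb (code_tag k) 7)
     (cpair 9 (cpair (code_arg1 k)
        (cpair 3 (cpair (saturated_form_code pK (code_arg1 k)) (cov_lookup (code_arg2 k) k h)))))
   0))))).

Definition translate_code (pK : aform) (n : nat) : nat := cov_rec (translate_step pK) 0 n.

Lemma translate_code_lcode pK p : translate_code pK (lcode p) = acode (translate pK p).
Proof.
  unfold translate_code. induction p; cbn [lcode translate acode]; code_step translate_step;
    rewrite ?IHp, ?IHp1, ?IHp2; unfold subset_form_code, saturated_form_code; reflexivity.
Qed.

Lemma computable_translate_code pK : computable_on 1 (fun l => translate_code pK (nth 0 l 0)).
Proof. apply computable_cov_rec0. unfold translate_step. computable. Qed.
#[local] Hint Resolve computable_translate_code : computable.

Definition false_form : aform := AAllN 0 (ANot (AEq (TVar 0) (TVar 0))).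

Lemma false_form_false rho sg : ~ asat rho sg false_form.
Proof. cbn [false_form asat teval]. intros H. apply (H 0). reflexivity. Qed.

Definition reduction (pK : aform) (n : nat) : nat :=
  nat_if (lcode_test n)
    (nat_if (free_count (S n) n) (acode false_form) (translate_code pK n))
    (acode false_form).

Lemma computable_reduction pK : computable (reduction pK).
Proof.
  assert (H : computable_on 1 (fun l => reduction pK (nth 0 l 0)))
    by (unfold reduction; computable).
  destruct H as [p Hp]. exists p. intros n. exact (Hp [n] eq_refl).
Qed.

Lemma reduction_sentence pK p : lsentence p -> reduction pK (lcode p) = acode (translate pK p).
Proof.
  intros Hp. apply lsentence_free_count in Hp. unfold reduction.
  destruct (lcode_test (lcode p)) eqn:E; [destruct (lcode_test_lcode p E)|].
  cbn [nat_if]. rewrite Hp. apply translate_code_lcode.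
Qed.

Lemma reduction_cases pK n :
  (exists p, lcode p = n /\ lsentence p /\ reduction pK n = acode (translate pK p)) \/
  reduction pK n = acode false_form.
Proof.
  destruct (lcode_test n) eqn:E; [right; unfold reduction; rewrite E; reflexivity|].
  destruct (lcode_test_sound n ltac:(congruence)) as [p <-].
  destruct (free_count (S (lcode p)) (lcode p)) eqn:F.
  - left. assert (Hp : lsentence p) by (apply lsentence_free_count, F).
    exists p. auto using reduction_sentence.
  - right. unfold reduction. rewrite E, F. reflexivity.
Qed.

Theorem proposition3p1 (X : Type) (opn : (X -> Prop) -> Prop)
  (beta kappa : nat -> X -> Prop) (H : AnLCS opn beta kappa) :
  many_one_le (FO_open opn) FO_N2.
Proof.
  destruct H as (Htop & Hbase & _ & Hcompact & Hunion & pK & HpK_free & HpK).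
  pose proof (translate_sentence_sem opn beta kappa pK Htop Hbase Hcompact Hunion HpK_free HpK)
    as Htranslate.
  exists (reduction pK). split; [apply computable_reduction|]. intros n. split.
  - intros (p & <- & Hp & Htrue). exists (translate pK p).
    rewrite reduction_sentence by exact Hp.
    repeat split; [exact (translate_free pK _ p HpK_free _ Hp) | apply Htranslate; assumption].
  - intros (q & Hq & _ & Htrue).
    destruct (reduction_cases pK n) as [(p & <- & Hp & E) | E]; rewrite E in Hq;
      apply acode_inj in Hq; subst q.
    + exists p. repeat split; [exact Hp | apply Htranslate; assumption].
    + destruct (false_form_false _ _ Htrue).
Qed.
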